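(* For every $T$, every sequence of forecasts $\mathbf p\in[0,1]^T$ and every sequence of outcomes $\mathbf x\in\{0,1\}^T$, $$\tfrac12\,\mathrm{MaxAgentReg}(\mathbf p,\mathbf x)\le \mathrm{VCal}(\mathbf p,\mathbf x)\le \mathrm{MaxAgentReg}(\mathbf p,\mathbf x).$$
   Context: A binary scoring rule is $\ell:[0,1]\times\{0,1\}\to\mathbb R$; with $\ell(p;q)=(1-q)\ell(p,0)+q\ell(p,1)$ it is proper if $\ell(p;p)\le\ell(p';p)$ for all $p,p'$. Let $\mathcal L$ be the set of proper scoring rules with values in $[-1,1]$. For $\beta=\frac1T\sum_tx_t$, $\mathrm{Reg}_\ell(\mathbf p,\mathbf x)=\sum_t\ell(p_t,x_t)-\sum_t\ell(\beta,x_t)$, and the U-calibration error is $\mathrm{MaxAgentReg}(\mathbf p,\mathbf x)=\sup_{\ell\in\mathcal L}\mathrm{Reg}_\ell(\mathbf p,\mathbf x)$. For $v\in[0,1]$ the V-shaped scoring rule $\ell_v$ is defined by $\ell_v(p,0)=v\,\mathrm{sgn}(p-v)$ and $\ell_v(p,1)=(1-v)\,\mathrm{sgn}(v-p)$, where $\mathrm{sgn}(0)=0$; its univariate form is $\ell_v(p;p)=-|p-v|$. The V-calibration error is $\mathrm{VCal}(\mathbf p,\mathbf x)=\sup_{v\in[0,1]}\mathrm{Reg}_{\ell_v}(\mathbf p,\mathbf x)$. *)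

From HB Require Import structures.
From mathcomp Require Import all_boot all_order all_algebra.
From mathcomp Require Import boolp classical_sets reals.
Set Implicit Arguments. Unset Strict Implicit. Unset Printing Implicit Defensive.
Import Order.TTheory GRing.Theory Num.Theory.
Local Open Scope ring_scope.
Local Open Scope classical_set_scope.

Section Defs.
Variable R : realType.

(* a binary scoring rule l(p, y); outcome y : bool (false = 0, true = 1) *)
Definition scoring_rule := R -> bool -> R.

Definition exp_score (l : scoring_rule) (p q : R) : R :=
  (1 - q) * l p false + q * l p true.

Definition proper (l : scoring_rule) : Prop :=
  forall p p' : R, 0 <= p <= 1 -> 0 <= p' <= 1 ->
    exp_score l p p <= exp_score l p' p.

Definition in_L (l : scoring_rule) : Prop :=
  proper l /\ forall p y, 0 <= p <= 1 -> -1 <= l p y <= 1.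

Definition beta (T : nat) (x : 'I_T -> bool) : R :=
  (\sum_(t < T) ((x t : nat)%:R : R)) / T%:R.

Definition Reg (l : scoring_rule) (T : nat) (p : 'I_T -> R) (x : 'I_T -> bool) : R :=
  \sum_(t < T) l (p t) (x t) - \sum_(t < T) l (beta x) (x t).

Definition MaxAgentReg (T : nat) (p : 'I_T -> R) (x : 'I_T -> bool) : R :=
  sup [set r | exists l, in_L l /\ r = Reg l p x].

Definition Vrule (v : R) : scoring_rule :=
  fun p y => if y then (1 - v) * Num.sg (v - p) else v * Num.sg (p - v).

Definition VCal (T : nat) (p : 'I_T -> R) (x : 'I_T -> bool) : R :=
  sup [set r | exists v : R, 0 <= v <= 1 /\ r = Reg (Vrule v) p x].

End Defs.

From Pilot Require Import Defs.
From HB Require Import structures.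
From mathcomp Require Import all_boot all_order all_algebra.
From mathcomp Require Import boolp classical_sets reals.
From mathcomp Require Import ring lra.
Import Order.TTheory GRing.Theory Num.Theory.
Local Open Scope ring_scope.
Local Open Scope classical_set_scope.

(* The regret of a rule is a signed sum of expected scores at finitely many
   forecast points, with weights and weighted outcomes both summing to zero.
   Sort the points z_0 < ... < z_k and merge z_0 into z_1.  For a proper rule
   the regret exceeds that of the merged observations by
   N * (l(z_0,0) - l(z_1,0)) + M * (slope z_0 - slope z_1),
   N and M being the mass and moment at z_0; properness pins the first bracket
   between -z_1 and -z_0 times the second, so this excess is at most half the
   slope drop times 2 (M - N v), which is the regret of the V-shaped rule l_v
   for v strictly inside the gap, extended to its endpoints by continuity.
   Telescoping over the gaps bounds the regret by (slope z_0 - slope z_k)/2 * VCal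
   <= 2 VCal.  Conversely every l_v lies in L. *)

Lemma affine_le_closed_itv {R : realFieldType} [a b α β S : R] : a < b ->
  (forall v, a < v < b -> α - β * v <= S) -> forall c, a <= c <= b -> α - β * c <= S.
Proof.
move=> ab hS c /andP[ac cb]; apply/ler_addgt0Pr => e e0.
set m := (a + b) / 2; set K := `|β * (m - c)|.
have K0 : 0 <= K := normr_ge0 _.
set t := e / (e + K).
have t0 : 0 < t by rewrite divr_gt0 //; lra.
have t1 : t <= 1 by rewrite ler_pdivrMr ?mul1r; lra.
have tK : t * K <= e by rewrite mulrAC ler_pdivrMr; nra.
have am : a < m < b by apply/andP; split; rewrite /m; lra.
have /hS : a < c + t * (m - c) < b by case/andP: am => am mb; apply/andP; split; nra.
have := ler_wpM2l (ltW t0) (ler_norm (β * (m - c))); rewrite -/K; lra.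
Qed.

Lemma exists_lt_path {d} {T : orderType d} [r : seq T] [z : T] :
  z \in r -> exists a s, path <%O a s /\ a :: s =i r.
Proof.
move=> zr; have : sorted <%O (sort <=%O (undup r)) by rewrite sort_lt_sorted undup_uniq.
have : sort <=%O (undup r) =i r by move=> y; rewrite mem_sort mem_undup.
case: (sort _ _) => [/(_ z)|a s mem_r path_s]; first by rewrite zr.
by exists a, s.
Qed.

Section ScoringRules.
Variable R : realType.
Implicit Types (l : scoring_rule R) (a b v z q : R).

Definition slope l z := l z true - l z false.

Lemma exp_scoreE l z q : exp_score l z q = l z false + q * slope l z.
Proof. by rewrite /exp_score /slope; ring. Qed.

Lemma exp_score_bool l z (y : bool) : exp_score l z (y : nat)%:R = l z y.
Proof. by case: y; rewrite /exp_score /=; ring. Qed.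

Lemma exp_score_Vrule v z q : exp_score (Vrule v) z q = (q - v) * Num.sg (v - z).
Proof. by rewrite /exp_score /Vrule -[z - v]opprB sgrN; ring. Qed.

Lemma mulr_sg_le_norm (c y : R) : c * Num.sg y <= `|c|.
Proof.
apply: le_trans (ler_norm _) _.
by rewrite normrM normr_sg ler_piMr ?lern1 ?leq_b1.
Qed.

Lemma Vrule_in_L v : 0 <= v <= 1 -> in_L (Vrule v).
Proof.
move=> /andP[v0 v1]; split=> [z z' _ _ | z y _].
  rewrite !exp_score_Vrule -[z - v]opprB !mulNr [(v - z) * _]mulrC -normrEsg lerN2.
  exact: mulr_sg_le_norm.
have c_bounds (c u : R) : 0 <= c <= 1 -> -1 <= c * Num.sg u <= 1.
  move=> /andP[c0 c1]; have := mulr_sg_le_norm c u.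
  have := mulr_sg_le_norm c (- u); rewrite sgrN ger0_norm //; lra.
by rewrite /Vrule; case: y; apply: c_bounds; lra.
Qed.

Lemma in_L_slope_sub_le [l z z'] : in_L l -> 0 <= z <= 1 -> 0 <= z' <= 1 ->
  slope l z - slope l z' <= 4.
Proof.
move=> [_ lb] z01 z'01; rewrite /slope.
move: (lb z true z01) (lb z false z01) (lb z' true z'01) (lb z' false z'01).
by do 4!case/andP=> ? ?; lra.
Qed.

Lemma proper_shift_le [l a b] [N M S : R] : Defs.proper l -> 0 <= a -> a < b -> b <= 1 ->
  2 * M - 2 * N * a <= S -> 2 * M - 2 * N * b <= S ->
  (l a false - l b false) * N + (slope l a - slope l b) * M
    <= (slope l a - slope l b) / 2 * S.
Proof.
move=> hl a0 ab b1 Sa Sb.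
have a01 : 0 <= a <= 1 by apply/andP; split; lra.
have b01 : 0 <= b <= 1 by apply/andP; split; lra.
have := hl a b a01 b01; have := hl b a b01 a01; rewrite !exp_scoreE => hb ha.
set D := l a false - l b false; set d := slope l a - slope l b.
have Da : D + a * d <= 0 by rewrite /D /d; lra.
have Db : 0 <= D + b * d by rewrite /D /d; lra.
have d0 : 0 <= d by nra.
have [N0|N0] := lerP 0 N.
  have := mulr_ge0_le0 N0 Da; have := ler_wpM2l d0 Sa; lra.
have := mulr_le0_ge0 (ltW N0) Db; have := ler_wpM2l d0 Sb; lra.
Qed.

Implicit Types (f : R -> R -> R) (obs : seq (R * R * R)).

(* An observation (z, q, w) is a forecast z, an outcome probability q and a
   signed weight w. *)
Definition wsum f obs : R := \sum_(o <- obs) o.2 * f o.1.1 o.1.2.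

Definition mass obs := wsum (fun _ _ => 1) obs.
Definition moment obs := wsum (fun _ q => q) obs.
Definition balanced obs := mass obs = 0 /\ moment obs = 0.

Definition at_point a obs := [seq o <- obs | o.1.1 == a].

Definition move_point a b (o : R * R * R) : R * R * R :=
  if o.1.1 == a then (b, o.1.2, o.2) else o.

Lemma eq_wsum f g obs :
  {in obs, forall o, f o.1.1 o.1.2 = g o.1.1 o.1.2} -> wsum f obs = wsum g obs.
Proof. by move=> fg; apply: eq_big_seq => o /fg ->. Qed.

Lemma wsum_affine (α β : R) obs :
  wsum (fun _ q => α + q * β) obs = α * mass obs + β * moment obs.
Proof.
rewrite /mass /moment /wsum !mulr_sumr -big_split /=.
by apply: eq_bigr => o _; ring.
Qed.

Lemma balanced_wsum_affine (α β : R) obs :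
  balanced obs -> wsum (fun _ q => α + q * β) obs = 0.
Proof. by case=> m0 mo0; rewrite wsum_affine m0 mo0 !mulr0 addr0. Qed.

Lemma wsum_move_point f a b obs :
  wsum f obs = wsum f (map (move_point a b) obs)
               + wsum (fun _ q => f a q - f b q) (at_point a obs).
Proof.
rewrite /wsum big_map big_filter [X in _ = _ + X]big_mkcond -big_split /=.
apply: eq_bigr => o _; rewrite /move_point.
by case: ifP => [/eqP ->|_] /=; ring.
Qed.

Lemma balanced_move_point a b obs :
  balanced obs -> balanced (map (move_point a b) obs).
Proof.
have same g : wsum (fun _ q => g q) (map (move_point a b) obs) = wsum (fun _ q => g q) obs.
  by rewrite /wsum big_map; apply: eq_bigr => o _; rewrite /move_point; case: ifP.
by rewrite /balanced /mass /moment (same (fun _ => 1)) (same id).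
Qed.

Lemma wsum_Vrule_right v obs :
  balanced obs -> {in obs, forall o, v < o.1.1} -> wsum (exp_score (Vrule v)) obs = 0.
Proof.
move=> hbal right; rewrite -(balanced_wsum_affine v (-1) obs hbal); apply: eq_wsum => o /right vo.
by rewrite exp_score_Vrule ltr0_sg ?subr_lt0 //; ring.
Qed.

Lemma wsum_Vrule_move_point a b v obs : a < v -> b < v ->
  wsum (exp_score (Vrule v)) (map (move_point a b) obs) = wsum (exp_score (Vrule v)) obs.
Proof.
move=> av bv; rewrite [RHS](wsum_move_point _ a b) -[LHS]addr0; congr (_ + _).
rewrite /wsum big1 // => o _.
by rewrite !exp_score_Vrule !gtr0_sg ?subr_gt0 // subrr mulr0.
Qed.

Lemma wsum_Vrule_gap [a b v obs] : balanced obs ->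
  {in obs, forall o, o.1.1 = a \/ b <= o.1.1} -> a < v < b ->
  wsum (exp_score (Vrule v)) obs
    = 2 * moment (at_point a obs) - 2 * mass (at_point a obs) * v.
Proof.
move=> hbal hobs /andP[av vb]; rewrite (wsum_move_point _ a b) wsum_Vrule_right.
- rewrite add0r (@eq_wsum _ (fun _ q => - (2 * v) + q * 2)) ?wsum_affine; first by ring.
  move=> o _; rewrite !exp_score_Vrule gtr0_sg ?subr_gt0 // ltr0_sg ?subr_lt0 //; ring.
- exact: balanced_move_point.
move=> _ /mapP[o /hobs o_at ->]; rewrite /move_point; case: eqP => [_ //|o_a].
by case: o_at => // bo; apply: lt_le_trans vb bo.
Qed.

Lemma proper_wsum_le [l S a s obs] : Defs.proper l -> path <%R a s ->
  {in a :: s, forall z, 0 <= z <= 1} -> balanced obs ->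
  {in obs, forall o, o.1.1 \in a :: s} ->
  (forall v, a < v < last a s -> v \notin a :: s ->
     wsum (exp_score (Vrule v)) obs <= S) ->
  wsum (exp_score l) obs <= (slope l a - slope l (last a s)) / 2 * S.
Proof.
move=> hl; elim: s a obs => [|b s IH] a obs /= hpath h01 hbal hobs hV.
  suff -> : wsum (exp_score l) obs = 0 by rewrite subrr !mul0r.
  rewrite -(balanced_wsum_affine (l a false) (slope l a) obs hbal).
  by apply: eq_wsum => o /hobs; rewrite inE => /eqP ->; apply: exp_scoreE.
case/andP: hpath => ab hpath.
have ge_b : {in b :: s, forall z, b <= z}.
  move=> z; rewrite inE => /orP[/eqP -> //|zs].
  by have /allP/(_ z zs)/ltW := order_path_min lt_trans hpath.
have a01 := h01 a (mem_head _ _); have b01 : 0 <= b <= 1 by apply: h01; rewrite !inE eqxx orbT.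
have IHab : wsum (exp_score l) (map (move_point a b) obs)
            <= (slope l b - slope l (last b s)) / 2 * S.
  apply: IH => //.
  - by move=> z zs; apply: h01; rewrite inE zs orbT.
  - exact: balanced_move_point.
  - move=> _ /mapP[o /hobs o_in ->]; rewrite /move_point; case: eqP => [_|o_a].
      exact: mem_head.
    by move: o_in; rewrite inE => /orP[/eqP|].
  move=> v /andP[bv vlast] v_notin; have av := lt_trans ab bv.
  rewrite wsum_Vrule_move_point //; apply: hV; first by rewrite av.
  by rewrite inE negb_or v_notin gt_eqF.
set N := mass (at_point a obs); set M := moment (at_point a obs).
have gap v : a < v < b -> 2 * M - 2 * N * v <= S.
  move=> /[dup] vab /andP[av vb]; rewrite -(wsum_Vrule_gap hbal _ vab).
    apply: hV; first by rewrite av (lt_le_trans vb (ge_b _ (mem_last _ _))).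
    by rewrite inE negb_or gt_eqF //=; apply/negP => /ge_b; rewrite leNgt vb.
  move=> o /hobs; rewrite inE => /orP[/eqP|/ge_b]; by [left|right].
have closure_gap := affine_le_closed_itv ab gap.
rewrite (wsum_move_point _ a b) (eq_wsum _ (fun _ q =>
    (l a false - l b false) + q * (slope l a - slope l b)) (at_point a obs)); last first.
  by move=> o _; rewrite !exp_scoreE; ring.
have := proper_shift_le hl (proj1 (andP a01)) ab (proj2 (andP b01))
  (closure_gap a _) (closure_gap b _).
rewrite wsum_affine -/N -/M; lra.
Qed.

Section Regret.
Variables (T : nat) (p : 'I_T -> R) (x : 'I_T -> bool).
Hypothesis p01 : forall t, 0 <= p t <= 1.

Lemma beta_itv : 0 <= beta R x <= 1.
Proof.
rewrite /beta; have [->|T0] := eqVneq (T%:R : R) 0; first by rewrite invr0 mulr0 lexx ler01.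
have sum_le : \sum_(t < T) ((x t : nat)%:R : R) <= T%:R.
  apply: le_trans (_ : _ <= \sum_(t < T) 1) _; last by rewrite sumr_const card_ord.
  by apply: ler_sum => t _; rewrite lern1 leq_b1.
by rewrite divr_ge0 ?sumr_ge0 //= ler_pdivrMr ?mul1r // lt0r T0 /=.
Qed.

Lemma beta_gt0 t : x t -> 0 < beta R x.
Proof.
move=> xt; rewrite /beta divr_gt0 // ?ltr0n ?(leq_ltn_trans (leq0n t) (ltn_ord t)) //.
rewrite (bigD1 t) //= xt [true%:R]/=.
have : 0 <= \sum_(i < T | i != t) ((x i : nat)%:R : R) by apply: sumr_ge0.
lra.
Qed.

Lemma Reg_Vrule0_ge0 : 0 <= Reg (Vrule 0) p x.
Proof.
rewrite /Reg -sumrB; apply: sumr_ge0 => t _; rewrite /Vrule.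
case xt: (x t); last by rewrite !mul0r subrr.
have := mulr_sg_le_norm 1 (p t).
by rewrite !sub0r !sgrN (gtr0_sg (beta_gt0 t xt)) normr1; lra.
Qed.

Lemma Reg_le_in_L l : in_L l -> Reg l p x <= 2 * T%:R.
Proof.
move=> [_ lb]; rewrite /Reg.
have sum_hi : \sum_(t < T) l (p t) (x t) <= \sum_(t < T) 1.
  by apply: ler_sum => t _; case/andP: (lb (p t) (x t) (p01 t)).
have sum_lo : \sum_(t < T) -1 <= \sum_(t < T) l (beta R x) (x t).
  by apply: ler_sum => t _; case/andP: (lb (beta R x) (x t) beta_itv).
move: sum_hi sum_lo; rewrite sumrN sumr_const card_ord; lra.
Qed.

Definition regret_obs : seq (R * R * R) :=
  [seq (p t, (x t : nat)%:R, 1) | t <- index_enum 'I_T]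
  ++ [seq (beta R x, (x t : nat)%:R, -1) | t <- index_enum 'I_T].

Lemma Reg_wsum l : Reg l p x = wsum (exp_score l) regret_obs.
Proof.
rewrite /wsum big_cat !big_map /Reg -sumrN.
by congr (_ + _); apply: eq_bigr => t _; rewrite /= exp_score_bool; ring.
Qed.

Lemma balanced_regret_obs : balanced regret_obs.
Proof.
by split; rewrite /mass /moment /wsum big_cat /= !big_map -big_split big1 // => t _ /=; ring.
Qed.

Let Lset := [set r | exists l, in_L l /\ r = Reg l p x].

Lemma has_sup_Lset : has_sup Lset.
Proof.
split; first by exists (Reg (Vrule 0) p x), (Vrule 0); split => //; apply: Vrule_in_L; rewrite lexx ler01.
by exists (2 * T%:R) => _ [l [lL ->]]; apply: Reg_le_in_L.
Qed.

Lemma Reg_Vrule_le_VCal v : 0 <= v <= 1 -> Reg (Vrule v) p x <= VCal p x.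
Proof.
move=> v01; apply: ub_le_sup; last by exists v.
by exists (2 * T%:R) => _ [u [u01 ->]]; apply/Reg_le_in_L/Vrule_in_L.
Qed.

Lemma VCal_ge0 : 0 <= VCal p x.
Proof. by apply: le_trans Reg_Vrule0_ge0 (Reg_Vrule_le_VCal _ _); rewrite lexx ler01. Qed.

Lemma VCal_le_MaxAgentReg : VCal p x <= MaxAgentReg p x.
Proof.
apply: sup_le; last exact: has_sup_Lset.
  by move=> _ [v [v01 ->]]; apply: le_down; exists (Vrule v); split => //; apply: Vrule_in_L.
by exists (Reg (Vrule 0) p x), 0; rewrite lexx ler01.
Qed.

Lemma Reg_le_2VCal l : in_L l -> Reg l p x <= 2 * VCal p x.
Proof.
move=> lL; have [a [s [path_s mem_s]]] :=
  exists_lt_path (mem_head (beta R x) (map p (index_enum 'I_T))).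
have s01 : {in a :: s, forall z, 0 <= z <= 1}.
  by move=> z; rewrite mem_s inE => /orP[/eqP ->|/mapP[t _ ->]]; [apply: beta_itv|apply: p01].
have obs_s : {in regret_obs, forall o, o.1.1 \in a :: s}.
  move=> o; rewrite mem_s mem_cat => /orP[] /mapP[t _ ->]; rewrite inE ?eqxx //=.
  by rewrite map_f ?orbT // mem_index_enum.
have a01 := s01 a (mem_head _ _); have last01 := s01 _ (mem_last a s).
apply: (@le_trans _ _ ((slope l a - slope l (last a s)) / 2 * VCal p x)).
  rewrite Reg_wsum; apply: proper_wsum_le lL.1 path_s s01 balanced_regret_obs obs_s _.
  move=> v /andP[av vlast] _; rewrite -Reg_wsum; apply: Reg_Vrule_le_VCal.
  by case/andP: a01; case/andP: last01 => *; apply/andP; split; lra.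
have := in_L_slope_sub_le lL a01 last01; have := VCal_ge0; nra.
Qed.

Lemma MaxAgentReg_le_2VCal : MaxAgentReg p x <= 2 * VCal p x.
Proof.
apply: ge_sup; first exact: has_sup_Lset.1.
by move=> _ [l [lL ->]]; apply: Reg_le_2VCal.
Qed.

End Regret.

End ScoringRules.

Theorem theorem4p2 (R : realType) (T : nat) (p : 'I_T -> R) (x : 'I_T -> bool) :
  (forall t, 0 <= p t <= 1) ->
  MaxAgentReg p x / 2 <= VCal p x /\ VCal p x <= MaxAgentReg p x.
Proof.
move=> p01; split; last exact: VCal_le_MaxAgentReg.
by rewrite ler_pdivrMr // mulrC; apply: MaxAgentReg_le_2VCal.
Qed.
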